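(* Let $G$ be a finite simple undirected graph and $k \ge 1$ an integer. Suppose that $n \geq 3$ and that pairwise distinct $k$-cliques $A_1, \dots, A_n$ of $G$ are pairwise adjacent in $\mathsf{TS}_k(G)$. Then either there exist a clique $U \subseteq V(G)$ of size $k+1$ and pairwise distinct vertices $a_1, \dots, a_n \in U$ with $A_i = U \setminus \{a_i\}$ for all $1 \le i \le n$, or there exist a clique $I \subseteq V(G)$ of size $k-1$ and pairwise distinct vertices $a_1, \dots, a_n \in V(G) \setminus I$ with $A_i = I \cup \{a_i\}$ for all $1 \le i \le n$. In particular, if $n > k+1$, the second alternative holds.
   Context: A $k$-clique is a set of $k$ pairwise adjacent vertices. $\mathsf{TS}_k(G)$ is the graph whose vertices are the $k$-cliques of $G$, two $k$-cliques $C, C'$ being adjacent iff there are vertices $u,v$ with $C \setminus C' = \{u\}$, $C' \setminus C = \{v\}$ and $uv \in E(G)$. *)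

From mathcomp Require Import all_boot.
Set Implicit Arguments. Unset Strict Implicit. Unset Printing Implicit Defensive.

Definition simple_graph (T : finType) (e : rel T) : Prop :=
  symmetric e /\ irreflexive e.

Definition is_clique (T : finType) (e : rel T) (C : {set T}) : Prop :=
  forall u v, u \in C -> v \in C -> u != v -> e u v.

Definition is_kclique (T : finType) (e : rel T) (k : nat) (C : {set T}) : Prop :=
  is_clique e C /\ #|C| = k.

Definition TS_adj (T : finType) (e : rel T) (C C' : {set T}) : Prop :=
  exists u v, C :\: C' = [set u] /\ C' :\: C = [set v] /\ e u v.

Definition alt_star (T : finType) (e : rel T) (k n : nat)
  (A : 'I_n -> {set T}) : Prop :=
  exists (U : {set T}) (a : 'I_n -> T),
    [/\ is_clique e U, #|U| = k.+1, injective a,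
        (forall i, a i \in U) & (forall i, A i = U :\ a i)].

Definition alt_sun (T : finType) (e : rel T) (k n : nat)
  (A : 'I_n -> {set T}) : Prop :=
  exists (I : {set T}) (a : 'I_n -> T),
    [/\ is_clique e I, #|I| = k.-1, injective a,
        (forall i, a i \notin I) & (forall i, A i = a i |: I)].

From mathcomp Require Import all_boot.
From mathcomp Require Import zify.

Set Implicit Arguments.
Unset Strict Implicit.
Unset Printing Implicit Defensive.

(* Only the intersection sizes |A_i ∩ A_j| = k - 1 matter.  Put U = A_0 ∪ A_1
   and I = A_0 ∩ A_1, of sizes k + 1 and k - 1.  If some A_i misses a vertex w
   of I, then A_i ∩ A_0 and A_i ∩ A_1 are forced to be A_0 \ {w} and
   A_1 \ {w}, so A_i = U \ {w}.  Hence if some A_j is not contained in U, it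
   contains I, and then every A_i contains I: otherwise A_i = U \ {w} would
   meet A_j inside I \ {w}, which is too small.  So either all A_i lie in U
   (a star) or all contain I (a sunflower); with n >= 3 each pair of vertices
   of U lies in a common A_i, so U is a clique. *)

Section FiniteSets.
Variable T : finType.
Implicit Types B U I : {set T}.

Lemma setD1_of_subset B U :
  B \subset U -> #|U| = #|B|.+1 -> exists2 x, x \in U & B = U :\ x.
Proof.
move=> sBU cardU; have /cards1P [x UBx] : #|U :\: B| == 1.
  by rewrite cardsDS // cardU subSnn.
have : x \in U :\: B by rewrite UBx set11.
rewrite inE => /andP [_ xU]; exists x => //.
by rewrite -UBx setDDr setDv set0U (setIidPr sBU).
Qed.

Lemma setU1_of_superset I B :
  I \subset B -> #|B| = #|I|.+1 -> exists2 x, x \notin I & B = x |: I.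
Proof.
move=> sIB cardB; have /cards1P [x BIx] : #|B :\: I| == 1.
  by rewrite cardsDS // cardB subSnn.
have : x \in B :\: I by rewrite BIx set11.
rewrite inE => /andP [xI _]; exists x => //.
by rewrite -{1}(setID B I) (setIidPr sIB) BIx setUC.
Qed.

End FiniteSets.

Lemma cardsI_TS_adj (T : finType) (e : rel T) k (C C' : {set T}) :
  #|C| = k -> TS_adj e C C' -> #|C :&: C'| = k.-1.
Proof.
move=> cardC [u [_ [CC'u _]]].
have := cardsD C C'; rewrite CC'u cards1 cardC.
have := subset_leq_card (subsetIl C C'); rewrite cardC; lia.
Qed.

Lemma is_clique_subset (T : finType) (e : rel T) (C D : {set T}) :
  C \subset D -> is_clique e D -> is_clique e C.
Proof. by move=> /subsetP sCD cliqueD u v /sCD uD /sCD vD; exact: cliqueD. Qed.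

Lemma is_clique_of_setD1 (T ι : finType) (e : rel T) (U : {set T}) (a : ι -> T) :
  2 < #|ι| -> injective a -> (forall i, is_clique e (U :\ a i)) ->
  is_clique e U.
Proof.
move=> card_gt2 inj_a cliqueUa u v uU vU uv.
have [i ai_uv] : exists i, a i \notin [set u; v].
  apply/existsP; apply: contraTT card_gt2; rewrite negb_exists => /forallP avoid.
  rewrite -leqNgt -cardsT -(card_imset _ inj_a).
  have <- : #|[set u; v]| = 2 by rewrite cards2 uv.
  apply: subset_leq_card; apply/subsetP => _ /imsetP [i _ ->].
  exact: negbNE (avoid i).
apply: (cliqueUa i) => //; rewrite in_setD1 ?uU ?vU andbT.
- by apply: contraNneq ai_uv => <-; rewrite !inE eqxx.
- by apply: contraNneq ai_uv => <-; rewrite !inE eqxx orbT.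
Qed.

Section NearlyEqualSets.
Variables (T ι : finType) (k : nat) (A : ι -> {set T}).
Hypothesis k_gt0 : 0 < k.
Hypothesis cardA : forall i, #|A i| = k.
Hypothesis cardAI : forall i j, i != j -> #|A i :&: A j| = k.-1.
Variables i0 i1 : ι.
Hypothesis i01 : i0 != i1.

Let U := A i0 :|: A i1.
Let I := A i0 :&: A i1.

Lemma card_setU_pair : #|U| = k.+1.
Proof. by rewrite cardsU cardAI // !cardA; lia. Qed.

Lemma eq_setD1_of_core_notin i w : w \in I -> w \notin A i -> A i = U :\ w.
Proof.
move=> wI wAi.
have AjD1_sub j : w \in A j -> A j :\ w \subset A i.
  move=> wAj; have ij : i != j by apply: contraNneq wAi => ->.
  suff <- : A i :&: A j = A j :\ w by exact: subsetIl.
  apply/eqP; rewrite eqEcard; apply/andP; split.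
    apply/subsetP => y; rewrite !inE => /andP [yAi ->]; rewrite andbT.
    by apply: contraNneq wAi => <-.
  by rewrite cardAI //; have := cardsD1 w (A j); rewrite wAj cardA; lia.
move: wI; rewrite inE => /andP [wA0 wA1].
apply/eqP; rewrite eq_sym eqEcard; apply/andP; split.
  by rewrite setDUl subUset !AjD1_sub.
have wU : w \in U by rewrite inE wA0.
by have := cardsD1 w U; rewrite wU cardA card_setU_pair; lia.
Qed.

Lemma core_subset_all j : ~~ (A j \subset U) -> forall i, I \subset A i.
Proof.
move=> AjU.
have IAj : I \subset A j.
  apply/subsetP => w wI; apply: contraNT AjU => wAj.
  by rewrite (eq_setD1_of_core_notin wI wAj) subsetDl.
have [x xAj xU] := subsetPn AjU.
have Aj_eq : A j = x |: I.
  apply/eqP; rewrite eq_sym eqEcard subUset sub1set xAj IAj /=.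
  rewrite cardsU1 cardAI // cardA.
  have -> : x \notin I by apply: contraNN xU => /setIP [xA0 _]; rewrite inE xA0.
  lia.
move=> i; apply/subsetP => w wI; apply: contraT => wAi.
have Ai_eq := eq_setD1_of_core_notin wI wAi.
have ij : i != j by apply: contraNneq AjU => <-; rewrite Ai_eq subsetDl.
(* A_i misses x (which lies outside U) and w, so A_i ∩ A_j is inside I \ {w}. *)
have : A i :&: A j \subset I :\ w.
  apply/subsetP => y; rewrite Ai_eq Aj_eq !inE => /andP [/andP [yw yU]].
  case/orP => [/eqP yx | ->]; last by rewrite yw.
  by rewrite -yx inE yU in xU.
move/subset_leq_card; rewrite cardAI //.
by have := cardsD1 w I; rewrite wI cardAI //; lia.
Qed.

Lemma subset_union_or_core_subset :
  (forall i, A i \subset U) \/ (forall i, I \subset A i).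
Proof.
have [/forallP AU | /forallPn [j AjU]] := boolP [forall i, A i \subset U].
  by left.
by right; exact: core_subset_all AjU.
Qed.

End NearlyEqualSets.

Lemma alt_star_of_subset (T : finType) (e : rel T) (k n : nat)
    (A : 'I_n -> {set T}) (U : {set T}) :
  2 < n -> injective A -> (forall i, is_kclique e k (A i)) ->
  #|U| = k.+1 -> (forall i, A i \subset U) -> alt_star e k A.
Proof.
move=> n_gt2 inj_A kcliqueA cardU AU.
have ex_a i : exists2 x, x \in U & A i = U :\ x.
  by apply: setD1_of_subset; rewrite // (kcliqueA i).2.
have [a aU A_eq] := fin_all_exists2 ex_a.
have inj_a : injective a by move=> i j aij; apply: inj_A; rewrite !A_eq aij.
exists U, a; split => //; apply: (is_clique_of_setD1 (a := a)) => //.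
  by rewrite card_ord.
by move=> i; rewrite -A_eq; case: (kcliqueA i).
Qed.

Lemma alt_sun_of_superset (T : finType) (e : rel T) (k n : nat)
    (A : 'I_n -> {set T}) (I : {set T}) :
  0 < k -> injective A -> (forall i, #|A i| = k) ->
  is_clique e I -> #|I| = k.-1 -> (forall i, I \subset A i) -> alt_sun e k A.
Proof.
move=> k_gt0 inj_A cardA cliqueI cardI IA.
have ex_a i : exists2 x, x \notin I & A i = x |: I.
  by apply: setU1_of_superset; rewrite // cardA cardI; lia.
have [a aI A_eq] := fin_all_exists2 ex_a.
by exists I, a; split => // i j aij; apply: inj_A; rewrite !A_eq aij.
Qed.

Lemma alt_star_card_le (T : finType) (e : rel T) (k n : nat)
    (A : 'I_n -> {set T}) :
  alt_star e k A -> n <= k.+1.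
Proof.
case=> U [a [_ cardU inj_a aU _]].
have : a @: [set: 'I_n] \subset U by apply/subsetP => _ /imsetP [i _ ->].
by move/subset_leq_card; rewrite card_imset // cardsT card_ord cardU.
Qed.

Theorem lemma3p1 (T : finType) (e : rel T) (k n : nat)
  (A : 'I_n -> {set T}) :
  simple_graph e -> 1 <= k -> 3 <= n ->
  injective A ->
  (forall i, is_kclique e k (A i)) ->
  (forall i j, i != j -> TS_adj e (A i) (A j)) ->
  (alt_star e k A \/ alt_sun e k A) /\ (k.+1 < n -> alt_sun e k A).
Proof.
move=> _ k_gt0 n_ge3 inj_A kcliqueA adjA.
have cardA i : #|A i| = k by case: (kcliqueA i).
have cardAI i j : i != j -> #|A i :&: A j| = k.-1.
  by move=> /adjA; apply: cardsI_TS_adj.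
have n_gt1 : 1 < n by lia.
pose i0 := Ordinal (ltnW n_gt1); pose i1 := Ordinal n_gt1.
have i01 : i0 != i1 by [].
have [AU | IA] := subset_union_or_core_subset k_gt0 cardA cardAI i01.
  have star := alt_star_of_subset n_ge3 inj_A kcliqueA
    (card_setU_pair k_gt0 cardA cardAI i01) AU.
  by split; [left | have := alt_star_card_le star; lia].
have sun : alt_sun e k A.
  apply: alt_sun_of_superset (cardAI _ _ i01) IA => //.
  exact: is_clique_subset (subsetIl _ _) (kcliqueA i0).1.
by split; [right | move=> _].
Qed.
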